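(* Every relation that is a delta matroid and belongs to IM-conj is basically binary.
   Context: A relation $R\subseteq\{0,1\}^V$ is a delta matroid if for all $x,y\in R$ and all $i$ with $x_i\ne y_i$ there exists $j$ with $x_j\ne y_j$ (possibly $j=i$) such that the configuration obtained from $x$ by flipping coordinates $i$ and $j$ lies in $R$. IM-conj is the class of relations expressible as a conjunction of implications $x_i\le x_j$ and pins $x_i=c$ ($c\in\{0,1\}$). A relation is basically binary if it is equivalent (up to renaming variables) to a Cartesian product of relations of arity at most two. *)

From HB Require Import structures.
From mathcomp Require Import all_boot.
Set Implicit Arguments. Unset Strict Implicit. Unset Printing Implicit Defensive.

Definition config (V : finType) := {ffun V -> bool}.
Definition relation (V : finType) := {set config V}.

(* x with the coordinates in {i, j} flipped (when j = i, only i is flipped),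
   i.e. the symmetric difference x Δ {i, j}. *)
Definition flip2 (V : finType) (x : config V) (i j : V) : config V :=
  [ffun k => if (k == i) || (k == j) then ~~ x k else x k].

Definition delta_matroid (V : finType) (R : relation V) : Prop :=
  forall x y, x \in R -> y \in R -> forall i, x i != y i ->
    exists j, x j != y j /\ flip2 x i j \in R.

Inductive im_atom (V : Type) :=
| Imp of V & V
| Pin of V & bool.

Definition sat_atom (V : finType) (x : config V) (a : im_atom V) : bool :=
  match a with
  | Imp i j => x i <= x j
  | Pin i c => x i == c
  end.

Definition IM_conj (V : finType) (R : relation V) : Prop :=
  exists cs : seq (im_atom V), forall x, (x \in R) = all (sat_atom x) cs.

Definition depends_only_on (V : finType) (S : relation V) (B : {set V}) : Prop :=
  forall x y : config V, (forall v, v \in B -> x v = y v) -> (x \in S) = (y \in S).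

(* R is basically binary: V is partitioned into blocks of size at most two
   (blocks given as a list; each variable lies in exactly one block), and R is
   the Cartesian product of relations S_B, each on its block B. *)
Definition basically_binary (V : finType) (R : relation V) : Prop :=
  exists bs : seq ({set V} * relation V),
    (forall b, b \in bs -> #|b.1| <= 2 /\ depends_only_on b.2 b.1) /\
    (forall v : V, count (fun b : {set V} * relation V => v \in b.1) bs = 1) /\
    (forall x, (x \in R) = all (fun b : {set V} * relation V => x \in b.2) bs).

From mathcomp Require Import all_boot.
Set Implicit Arguments. Unset Strict Implicit. Unset Printing Implicit Defensive.

(* An IM-conj relation R is closed under the pointwise meet and join of
   configurations, so every nonempty subfamily of R has its pointwise meet and
   join in R; in particular R has a least and a greatest element.  The proof
   uses only this lattice structure together with the delta-matroid axiom.

   Say that u forces v in R when u <> v, x_u <= x_v on all of R, and neither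
   x_v = 1 nor x_u = 0 holds identically on R.  Flipping u in the least
   element of R (resp. v in the greatest one) and applying the delta-matroid
   axiom shows that each variable forces at most one variable and is forced
   by at most one.  Together with transitivity of forcing this gives that the
   symmetric "forcing graph" has degree at most one, so the blocks
   {v} u {neighbours of v} partition V into sets of size at most two.

   Finally R is the product of its restrictions to the blocks: if x agrees on
   every block with some element of R, then x is the join of the elements of
   R lying below x, because every coordinate set to 1 in x is covered by the
   least element of R having that coordinate set to 1.  The main theorem is
   thus an instance of the statement for lattice-closed delta matroids. *)

Section PointwiseLattice.
Variable V : finType.

Definition meet (x y : config V) : config V := [ffun k => x k && y k].
Definition join (x y : config V) : config V := [ffun k => x k || y k].

Definition meet_closed (R : relation V) : Prop :=
  forall x y, x \in R -> y \in R -> meet x y \in R.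
Definition join_closed (R : relation V) : Prop :=
  forall x y, x \in R -> y \in R -> join x y \in R.

Lemma sat_atom_meet (x y : config V) (a : im_atom V) :
  sat_atom x a -> sat_atom y a -> sat_atom (meet x y) a.
Proof.
case: a => [i j|i c] /=; rewrite !ffunE.
  by case: (x i); case: (x j); case: (y i); case: (y j).
by case: (x i); case: (y i); case: c.
Qed.

Lemma sat_atom_join (x y : config V) (a : im_atom V) :
  sat_atom x a -> sat_atom y a -> sat_atom (join x y) a.
Proof.
case: a => [i j|i c] /=; rewrite !ffunE.
  by case: (x i); case: (x j); case: (y i); case: (y j).
by case: (x i); case: (y i); case: c.
Qed.

Lemma IM_conj_meet (R : relation V) :
  IM_conj R -> meet_closed R.
Proof.
case=> cs defR x y; rewrite !defR; elim: cs {defR} => //= a cs IH.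
by case/andP=> xa xcs /andP[ya ycs]; rewrite sat_atom_meet ?IH.
Qed.

Lemma IM_conj_join (R : relation V) :
  IM_conj R -> join_closed R.
Proof.
case=> cs defR x y; rewrite !defR; elim: cs {defR} => //= a cs IH.
by case/andP=> xa xcs /andP[ya ycs]; rewrite sat_atom_join ?IH.
Qed.

Lemma foldr_closed (op : config V -> config V -> config V) (R : relation V) :
  (forall x y, x \in R -> y \in R -> op x y \in R) ->
  forall x0 s, x0 \in R -> {subset s <= R} -> foldr op x0 s \in R.
Proof.
move=> opR x0; elim=> [|y s IH] //= x0R sR.
apply: opR; first by apply: sR; rewrite mem_head.
by apply: IH => // z zs; apply: sR; rewrite inE zs orbT.
Qed.

Lemma bigmeet_in (R : relation V) : meet_closed R ->
  forall (S : relation V) x0, x0 \in S -> S \subset R ->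
  exists2 z, z \in R & forall k, z k = [forall y in S, y k].
Proof.
move=> meetR S x0 x0S /subsetP SR; exists (foldr meet x0 (enum S)).
  by apply: foldr_closed => //; [exact: SR | move=> y; rewrite mem_enum; exact: SR].
move=> k; have -> : foldr meet x0 (enum S) k = x0 k && all (fun y : config V => y k) (enum S).
  by elim: (enum S) => [|y s IH] /=; rewrite ?andbT // ffunE IH andbCA.
apply/andP/forall_inP => [[_ /allP all_k] y yS | all_k]; first by apply: all_k; rewrite mem_enum.
by split; [exact: all_k | apply/allP => y; rewrite mem_enum; exact: all_k].
Qed.

Lemma bigjoin_in (R : relation V) : join_closed R ->
  forall (S : relation V) x0, x0 \in S -> S \subset R ->
  exists2 z, z \in R & forall k, z k = [exists y in S, y k].
Proof.
move=> joinR S x0 x0S /subsetP SR; exists (foldr join x0 (enum S)).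
  by apply: foldr_closed => //; [exact: SR | move=> y; rewrite mem_enum; exact: SR].
move=> k; have -> : foldr join x0 (enum S) k = x0 k || has (fun y : config V => y k) (enum S).
  by elim: (enum S) => [|y s IH] /=; rewrite ?orbF // ffunE IH orbCA.
apply/orP/exists_inP => [[x0k | /hasP[y yS yk]] | [y yS yk]]; first by exists x0.
  by exists y; rewrite // -mem_enum.
by right; apply/hasP; exists y; rewrite ?mem_enum.
Qed.

End PointwiseLattice.

Section ForcingGraph.
Variables (V : finType) (R : relation V).

Definition forces (u v : V) : bool :=
  [&& u != v, [forall x in R, x u ==> x v], [exists x in R, ~~ x v] & [exists x in R, x u]].

Definition adjacent (u v : V) : bool := forces u v || forces v u.

Definition block (v : V) : {set V} := [set u | (u == v) || adjacent u v].

Lemma forces_irr u : forces u u = false.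
Proof. by rewrite /forces eqxx. Qed.

(* Forcing is transitive; the nontriviality conditions come from the ends. *)
Lemma forces_trans u j k : forces u j -> forces j k -> k != u -> forces u k.
Proof.
case/and4P=> _ /forall_inP uj _ xu; case/and4P=> _ /forall_inP jk nxk _ nku.
apply/and4P; split=> //; first by rewrite eq_sym.
by apply/forall_inP => x xR; apply/implyP => /(implyP (uj x xR)); apply/implyP/jk.
Qed.

Lemma flip2_other (x : config V) i l k : k != i -> flip2 x i l k != x k -> k = l.
Proof. by rewrite ffunE => /negbTE -> /=; case: (eqVneq k l) => [//|_]; rewrite eqxx. Qed.

Hypothesis dmR : delta_matroid R.
Hypothesis meetR : meet_closed R.
Hypothesis joinR : join_closed R.

Lemma least_element x0 : x0 \in R ->
  exists2 m, m \in R & forall y k, y \in R -> m k -> y k.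
Proof.
move=> x0R; have [m mR mE] := bigmeet_in meetR x0R (subxx R).
by exists m => // y k yR; rewrite mE => /forall_inP; apply.
Qed.

Lemma greatest_element x0 : x0 \in R ->
  exists2 M, M \in R & forall y k, y \in R -> y k -> M k.
Proof.
move=> x0R; have [M MR ME] := bigjoin_in joinR x0R (subxx R).
by exists M => // y k yR yk; rewrite ME; apply/exists_inP; exists y.
Qed.

(* In the least element m of R
   the coordinates u, j, k are 0; the delta-matroid axiom flips u together
   with a single other coordinate l, and the result, having u = 1, must
   have j = k = 1, whence j = l = k. *)
Lemma forces_out_unique u j k : forces u j -> forces u k -> j = k.
Proof.
case/and4P=> nuj /forall_inP uj /exists_inP[x xR xj] /exists_inP[w wR wu].
case/and4P=> nuk /forall_inP uk /exists_inP[y yR yk] _.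
have [m mR m_least] := least_element xR.
have mj : m j = false by apply: contraNF (m_least _ _ xR) xj.
have mk : m k = false by apply: contraNF (m_least _ _ yR) yk.
have mu : m u = false by apply: contraFF (implyP (uj m mR)) mj.
have [l [_ fR]] : exists l, m l != w l /\ flip2 m u l \in R by apply: dmR; rewrite ?mu ?wu.
have fu : flip2 m u l u by rewrite ffunE eqxx mu.
have -> : j = l.
  apply: (flip2_other (x := m) (i := u)); first by rewrite eq_sym.
  by rewrite (implyP (uj _ fR) fu) mj.
apply: esym (flip2_other (x := m) (i := u) _ _); first by rewrite eq_sym.
by rewrite (implyP (uk _ fR) fu) mk.
Qed.

(* Dually, using the greatest element: each variable is forced by at most
   one variable. *)
Lemma forces_in_unique u w j : forces u j -> forces w j -> u = w.
Proof.
case/and4P=> nuj /forall_inP uj /exists_inP[x xR xj] /exists_inP[y yR yu].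
case/and4P=> nwj /forall_inP wj _ /exists_inP[z zR zw].
have [M MR M_greatest] := greatest_element xR.
have Mu : M u := M_greatest _ _ yR yu.
have Mw : M w := M_greatest _ _ zR zw.
have [l [_ fR]] : exists l, M l != x l /\ flip2 M j l \in R.
  by apply: dmR; rewrite ?(implyP (uj M MR) Mu) ?(negbTE xj).
have fj : flip2 M j l j = false by rewrite ffunE eqxx (implyP (uj M MR) Mu).
have -> : u = l.
  by apply: (flip2_other (x := M) (i := j) nuj); rewrite (contraFF (implyP (uj _ fR)) fj) Mu.
apply: esym (flip2_other (x := M) (i := j) nwj _).
by rewrite (contraFF (implyP (wj _ fR)) fj) Mw.
Qed.

(* Every vertex of the forcing graph has at most one neighbour; the mixed
   cases reduce to the previous two lemmas through transitivity. *)
Lemma adjacent_unique a b c : adjacent a b -> adjacent a c -> b = c.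
Proof.
case/orP=> ab; case/orP=> ac.
- exact: forces_out_unique ab ac.
- have [//|nbc] := eqVneq b c.
  have ba : b = a := forces_out_unique (forces_trans ac ab nbc) ac.
  by move: ab; rewrite ba forces_irr.
- have [->//|ncb] := eqVneq c b.
  have ca : c = a := forces_out_unique (forces_trans ab ac ncb) ab.
  by move: ac; rewrite ca forces_irr.
- exact: forces_in_unique ab ac.
Qed.

Lemma adjacent_sym u v : adjacent u v = adjacent v u.
Proof. by rewrite /adjacent orbC. Qed.

Lemma block_eq v w : v \in block w -> block v = block w.
Proof.
rewrite inE; have [->//|nvw /= vw] := eqVneq v w.
apply/setP => u; rewrite !inE.
have [->|nuv] /= := eqVneq u v; first by rewrite vw orbT.
have [->|nuw] /= := eqVneq u w; first by rewrite adjacent_sym.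
apply/idP/idP => [uv | uw].
  by rewrite adjacent_sym in uv; rewrite (adjacent_unique uv vw) eqxx in nuw.
rewrite adjacent_sym in uw; rewrite adjacent_sym in vw.
by rewrite (adjacent_unique uw vw) eqxx in nuv.
Qed.

Lemma block_card v : #|block v| <= 2.
Proof.
have [u uv|no_adj] := pickP (adjacent^~ v).
  apply: leq_trans (_ : #|[set v; u]| <= 2); last by rewrite cards2; case: (v != u).
  apply/subset_leq_card/subsetP => w; rewrite !inE => /orP[->//|wv].
  rewrite adjacent_sym in uv; rewrite adjacent_sym in wv.
  by rewrite (adjacent_unique wv uv) eqxx orbT.
apply: leq_trans (_ : #|[set v]| <= 2); last by rewrite cards1.
by apply/subset_leq_card/subsetP => w; rewrite !inE no_adj orbF.
Qed.

Section BlockProduct.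
Hypothesis R_nonempty : R != set0.
Variable x : config V.
Hypothesis x_local : forall v, exists2 y, y \in R & forall k, k \in block v -> y k = x k.

Lemma element_below : exists2 m, m \in R & forall k, m k -> x k.
Proof.
have [r rR] := set0Pn _ R_nonempty; have [m mR m_least] := least_element rR.
exists m => // k mk; have [y yR yx] := x_local k.
by rewrite -yx ?inE ?eqxx //; apply: m_least mk.
Qed.

(* Each 1-coordinate v of x is witnessed by an element of R below x, namely
   the least element of R with v set to 1: a coordinate outside the block of
   v that it sets to 1 would be forced by v. *)
Lemma support_below v : x v -> exists2 a, a \in R & a v /\ forall k, a k -> x k.
Proof.
move=> xv; have [y yR yx] := x_local v.
have yv : y v by rewrite yx // inE eqxx.
have [m mR mx] := element_below.
pose S := [set z in R | z v].
have yS : y \in S by rewrite inE yR yv.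
have SR : S \subset R by apply/subsetP => z; rewrite inE => /andP[].
have [a aR aE] := bigmeet_in meetR yS SR.
have a_le z k : z \in R -> z v -> a k -> z k.
  by move=> zR zv; rewrite aE => /forall_inP; apply; rewrite inE zR zv.
exists a => //; split; first by rewrite aE; apply/forall_inP => z; rewrite inE => /andP[].
move=> k ak; have [kv|kNv] := boolP (k \in block v); first by rewrite -yx //; apply: a_le.
have [|nmk] := boolP (m k); first exact: mx.
have vk : forces v k.
  apply/and4P; split.
  - by apply: contraNneq kNv => <-; rewrite inE eqxx.
  - by apply/forall_inP => z zR; apply/implyP => zv; apply: a_le.
  - by apply/exists_inP; exists m.
  - by apply/exists_inP; exists y.
by move: kNv; rewrite inE /adjacent vk !orbT.
Qed.

(* x is the join of the elements of R lying below x. *)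
Lemma block_product : x \in R.
Proof.
have [m mR mx] := element_below.
pose S := [set z in R | [forall k, z k ==> x k]].
have mS : m \in S by rewrite inE mR; apply/forallP => k; apply/implyP/mx.
have SR : S \subset R by apply/subsetP => z; rewrite inE => /andP[].
have [z zR zE] := bigjoin_in joinR mS SR.
suff -> : x = z by [].
apply/ffunP => k; rewrite zE; apply/idP/exists_inP => [xk | [y]].
  have [a aR [ak ax]] := support_below xk.
  by exists a; rewrite // inE aR; apply/forallP => i; apply/implyP/ax.
by rewrite inE => /andP[_ /forallP y_le] yk; apply: implyP (y_le k) yk.
Qed.

End BlockProduct.

End ForcingGraph.

Section Decomposition.
Variables (V : finType) (R : relation V).

Definition restriction (b : {set V}) : relation V :=
  [set x : config V | [exists y in R, [forall k in b, y k == x k]]].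

Lemma restriction_depends b : depends_only_on (restriction b) b.
Proof.
move=> x y xy; rewrite !inE; apply/exists_inP/exists_inP => -[z zR /forall_inP zb].
  by exists z => //; apply/forall_inP => k kb; rewrite -(xy k kb) zb.
by exists z => //; apply/forall_inP => k kb; rewrite (xy k kb) zb.
Qed.

(* The decomposition: the distinct blocks with the projections of R on them,
   plus an empty block recording whether R is empty (when V is empty the
   blocks alone cannot distinguish the empty relation from the full one). *)
Definition blocks : seq {set V} := undup [seq block R v | v <- enum V].

Definition decomposition : seq ({set V} * relation V) :=
  (set0, [set x : config V | R != set0]) :: [seq (b, restriction b) | b <- blocks].

Lemma block_in_blocks v : block R v \in blocks.
Proof. by rewrite mem_undup; apply: map_f; rewrite mem_enum. Qed.

Hypothesis dmR : delta_matroid R.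
Hypothesis meetR : meet_closed R.
Hypothesis joinR : join_closed R.

Lemma decomposition_small b :
  b \in decomposition -> #|b.1| <= 2 /\ depends_only_on b.2 b.1.
Proof.
rewrite inE => /orP[/eqP -> | /mapP[c]] /=.
  by split=> [|x y _]; rewrite ?cards0 ?inE.
rewrite mem_undup => /mapP[v _ ->] ->; split; [exact: block_card | exact: restriction_depends].
Qed.

Lemma decomposition_partition v :
  count (fun b : {set V} * relation V => v \in b.1) decomposition = 1.
Proof.
rewrite /= inE add0n count_map (@eq_in_count _ _ (pred1 (block R v))).
  by rewrite count_uniq_mem ?undup_uniq ?block_in_blocks.
move=> b; rewrite mem_undup => /mapP[w _ ->] /=.
by apply/idP/eqP => [/(block_eq dmR meetR joinR) -> | ->]; rewrite ?inE ?eqxx.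
Qed.

Lemma decomposition_product x :
  (x \in R) = all (fun b : {set V} * relation V => x \in b.2) decomposition.
Proof.
rewrite /= all_map inE; apply/idP/andP => [xR | [R0 /allP x_local]].
  split; first by apply/set0Pn; exists x.
  by apply/allP => b _; rewrite /= inE; apply/exists_inP; exists x => //; apply/forall_inP.
apply: (block_product meetR joinR R0) => v.
have := x_local _ (block_in_blocks v); rewrite /= inE => /exists_inP[y yR /forall_inP yx].
by exists y => // k kv; apply/eqP/yx.
Qed.

End Decomposition.

Theorem lattice_delta_matroid_basically_binary (V : finType) (R : relation V) :
  delta_matroid R -> meet_closed R -> join_closed R -> basically_binary R.
Proof.
move=> dmR meetR joinR; exists (decomposition R); split; last split.
- exact: decomposition_small.
- exact: decomposition_partition.
- exact: decomposition_product.
Qed.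

Theorem mainTheorem14 (V : finType) (R : relation V) :
  delta_matroid R -> IM_conj R -> basically_binary R.
Proof.
move=> dmR imR; apply: lattice_delta_matroid_basically_binary => //.
  exact: IM_conj_meet.
exact: IM_conj_join.
Qed.
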